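(* Let $\operatorname{char}(k)\ne2$. For every term $\lambda$ over $X$, there exist $\alpha_i\in k$ and GDN supertableaux $\lambda_i$ over $X$ with $\ell(\lambda_i)=\ell(\lambda)$ and $r(\lambda_i)\ge r(\lambda)$ such that $\lambda=\sum_i\alpha_i\lambda_i$ in $\mathrm{GDN}_s(X)$. In particular $\mathrm{Tab}_s(X)$ spans $\mathrm{GDN}_s(X)$.
   Context: A GDN superalgebra is a superalgebra $\mathcal A=\mathcal A_0\oplus\mathcal A_1$ over a field $k$ (product $\circ$, $\mathcal A_i\circ\mathcal A_j\subseteq\mathcal A_{i+j}$ mod 2, $|x|=i$ for nonzero $x\in\mathcal A_i$) satisfying for homogeneous $x,y,z$: $x\circ(y\circ z)-(x\circ y)\circ z=(-1)^{|x||y|}(y\circ(x\circ z)-(y\circ x)\circ z)$ and $(x\circ y)\circ z=(-1)^{|y||z|}(x\circ z)\circ y$. $X=X_0\sqcup X_1$ is well-ordered, elements of $X_i$ have parity $i$, and $\mathrm{GDN}_s(X)$ is the free GDN superalgebra on $X$. Terms over $X$: letters of $X$ and products $(\mu\circ\nu)$ of terms, regarded as elements of $\mathrm{GDN}_s(X)$; length $\ell$ is the number of letters. $[\mu_1,\dots,\mu_n]_L=((\cdots(\mu_1\circ\mu_2)\cdots)\circ\mu_n)$, $[\mu_1,\dots,\mu_n]_R=(\mu_1\circ(\cdots\circ(\mu_{n-1}\circ\mu_n)\cdots))$; a simple term is $[a_1,\dots,a_n]_R$ with $a_i\in X$, $n\ge1$. Root number: $r(a)=0$ ($a\in X$), $r((\mu\circ\nu))=r(\mu)+1$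 if $\nu\in X$, else $r(\mu)+r(\nu)$. A GDN supertableau over $X$ is a term $\mu=[a,\mu_1,\dots,\mu_n]_L$ with $a\in X$, $n\ge0$, simple terms $\mu_i=[a_{i,r_i},\dots,a_{i,1}]_R$ of length $r_i\ge1$, such that: (i) $r_1\ge\dots\ge r_n$; (ii) if $r_i=r_{i+1}$ then $a_{i,1}\ge a_{i+1,1}$; (iii) $a\ge a_{1,r_1}\ge\dots\ge a_{1,2}\ge a_{2,r_2}\ge\dots\ge a_{2,2}\ge\dots\ge a_{n,r_n}\ge\dots\ge a_{n,2}$; (iv) among the letters of the chain in (iii), any two in different positions that both lie in $X_1$ are distinct; (v) if $a_{i,1},a_{i+1,1}\in X_1$ and $r_i=r_{i+1}$ then $a_{i,1}\ne a_{i+1,1}$. $\mathrm{Tab}_s(X)$ is the set of all GDN supertableaux. *)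

From HB Require Import structures.
From mathcomp Require Import all_boot all_order all_algebra.
Set Implicit Arguments. Unset Strict Implicit. Unset Printing Implicit Defensive.
Import Order.TTheory GRing.Theory.

Inductive term (X : Type) := Letter of X | Prod of term X & term X.
Arguments Letter {X}. Arguments Prod {X}.

Fixpoint tlen {X} (t : term X) : nat :=
  match t with Letter _ => 1 | Prod u v => tlen u + tlen v end.

Fixpoint troot {X} (t : term X) : nat :=
  match t with
  | Letter _ => 0
  | Prod u v => match v with Letter _ => (troot u).+1 | _ => troot u + troot v end
  end.

Fixpoint simple_term {X} (h : X) (t : seq X) : term X :=
  match t with [::] => Letter h | h' :: t' => Prod (Letter h) (simple_term h' t') end.

(* [a, mu_1, ..., mu_n]_L where mu_i = simple_term p_i.1 p_i.2, i.e. the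
   letters of mu_i, read left to right, are p_i.1 :: p_i.2
   = a_{i,r_i}, ..., a_{i,1}. *)
Definition tab_term {X} (a : X) (ls : seq (X * seq X)) : term X :=
  foldl (fun acc p => Prod acc (simple_term p.1 p.2)) (Letter a) ls.

Section Tab.
Context {d : Order.disp_t} {X : orderType d} (par : X -> bool).

(* conditions (ii),(v) plus (i) for consecutive simple terms *)
Definition tab_rel (p q : X * seq X) : bool :=
  (size q.2 <= size p.2)%N &&
  ((size p.2 == size q.2) ==>
     ((last q.1 q.2 <= last p.1 p.2)%O &&
      ~~ [&& par (last p.1 p.2), par (last q.1 q.2) & last p.1 p.2 == last q.1 q.2])).

(* chain of (iii): a, a_{1,r_1}, ..., a_{1,2}, a_{2,r_2}, ..., a_{n,2} *)
Definition tab_chain (a : X) (ls : seq (X * seq X)) : seq X :=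
  a :: flatten [seq belast p.1 p.2 | p <- ls].

Definition tab_cond (a : X) (ls : seq (X * seq X)) : bool :=
  [&& sorted (fun x y => (y <= x)%O) (tab_chain a ls),
      uniq (filter par (tab_chain a ls)) &
      sorted tab_rel ls].

(* GDN supertableau (par x = true means x \in X_1) *)
Definition is_tableau (t : term X) : Prop :=
  exists a ls, t = tab_term a ls /\ tab_cond a ls.
End Tab.

Definition sgn {k : pzRingType} (b : bool) : k := if b then (-1)%R else 1%R.

Definition is_GDN_super (k : fieldType) (A : lmodType k) (mul : A -> A -> A)
  (Apar : bool -> pred A) : Prop :=
  ((forall a x y z, mul (a *: x + y) z = a *: mul x z + mul y z)%R /\
   (forall a x y z, mul z (a *: x + y) = a *: mul z x + mul z y)%R) /\
  ((forall b, Apar b 0%R) /\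
   (forall b a x y, Apar b x -> Apar b y -> Apar b (a *: x + y)%R) /\
   (forall x, exists x0 x1, [/\ Apar false x0, Apar true x1 & x = (x0 + x1)%R]) /\
   (forall x, Apar false x -> Apar true x -> x = 0%R) /\
   (forall b c x y, Apar b x -> Apar c y -> Apar (b (+) c) (mul x y))) /\
  ((forall b c e x y z, Apar b x -> Apar c y -> Apar e z ->
      (mul x (mul y z) - mul (mul x y) z =
       sgn (b && c) *: (mul y (mul x z) - mul (mul y x) z))%R) /\
   (forall b c e x y z, Apar b x -> Apar c y -> Apar e z ->
      mul (mul x y) z = (sgn (c && e) *: mul (mul x z) y)%R)).

Fixpoint teval {X} {A : Type} (mul : A -> A -> A) (f : X -> A) (t : term X) : A :=
  match t with Letter x => f x | Prod u v => mul (teval mul f u) (teval mul f v) end.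

From HB Require Import structures.
From mathcomp Require Import all_boot all_order all_algebra.
From mathcomp Require Import zify.
From Stdlib Require Import Btauto.
Import Order.TTheory GRing.Theory.
Set Implicit Arguments. Unset Strict Implicit. Unset Printing Implicit Defensive.
Local Open Scope ring_scope.

(* Left symmetry rewrites every term as a combination of left-normed products
   [a, mu_1, ..., mu_n]_L of simple terms ("pretableaux") without lowering the root
   number. Modulo terms of the same length and larger root number, right
   commutativity permutes the simple factors, and left symmetry permutes, up to an
   explicit sign, the letters of the chain a, a_{1,r_1}, ..., a_{n,2}, the last
   letters a_{i,1} staying attached to their factors. Sorting the factors and the
   chain gives a tableau, unless an odd letter occurs twice in the chain or two
   consecutive factors of equal length end with the same odd letter; then the term is
   congruent to its own negative, hence vanishes modulo higher root number because 2
   is invertible in k. Induction on length minus root number concludes. Only finite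
   sequences get sorted. *)

Lemma not_uniq_filter_split (T : eqType) (p : pred T) s : ~~ uniq (filter p s) ->
  exists q o m r, s = q ++ o :: m ++ o :: r /\ p o.
Proof.
elim: s => //= x s IH; case px: (p x) => /=; last first.
  by move/IH => [q [o [m [r [-> po]]]]]; exists (x :: q), o, m, r.
case x_in: (x \in filter p s) => /=.
  by move: x_in; rewrite mem_filter => /andP [_ /splitPr [m r]]; exists [::], x, m, r.
by move/IH => [q [o [m [r [-> po]]]]]; exists (x :: q), o, m, r.
Qed.

Lemma not_sorted_split (T : Type) (e : rel T) s : ~~ sorted e s ->
  exists s1 x y s2, s = s1 ++ x :: y :: s2 /\ ~~ e x y.
Proof.
elim: s => //= x s IH; case: s IH => //= y s IH.
rewrite negb_and => /orP [not_xy | /IH [s1 [x' [y' [s2 [-> not_xy]]]]]].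
  by exists [::], x, y, s.
by exists (x :: s1), x', y', s2.
Qed.

Lemma addb_xorb (b c : bool) : b (+) c = xorb b c.
Proof. by case: b; case: c. Qed.

Lemma sgnD {k : fieldType} (b c : bool) : sgn (b (+) c) = sgn b * sgn c :> k.
Proof. by case: b; case: c; rewrite /sgn ?mulN1r ?opprK ?mul1r. Qed.

Lemma sgnN {k : fieldType} (b : bool) : - sgn b = sgn (~~ b) :> k.
Proof. by case: b; rewrite /sgn ?opprK. Qed.

Lemma sgnV {k : fieldType} (b : bool) : (sgn b)^-1 = sgn b :> k.
Proof. by case: b; rewrite /sgn ?invrN invr1. Qed.

Lemma sgn_neq0 {k : fieldType} (b : bool) : sgn b != 0 :> k.
Proof. by case: b; rewrite /sgn ?oppr_eq0 oner_eq0. Qed.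

Section GDNTableaux.
Variables (k : fieldType) (disp : Order.disp_t) (X : orderType disp) (par : X -> bool).
Implicit Types (t u v w y : term X).

Definition parity (s : seq X) : bool := odd (count par s).

Lemma parity_cat s1 s2 : parity (s1 ++ s2) = parity s1 (+) parity s2.
Proof. by rewrite /parity count_cat oddD. Qed.

Lemma parity_cons x s : parity (x :: s) = par x (+) parity s.
Proof. by rewrite /parity /= oddD; case: (par x). Qed.

Lemma parity_seq1 x : parity [:: x] = par x.
Proof. by rewrite /parity /=; case: (par x). Qed.

Fixpoint tparity (t : term X) : bool :=
  match t with Letter x => par x | Prod u v => tparity u (+) tparity v end.

Definition gdn_model (A : lmodType k) (mul : A -> A -> A) (Apar : bool -> pred A)
    (f : X -> A) :=
  is_GDN_super mul Apar /\ forall x, Apar (par x) (f x).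

Section Model.
Variables (A : lmodType k) (mul : A -> A -> A) (Apar : bool -> pred A) (f : X -> A).
Hypothesis model : gdn_model mul Apar f.
Local Notation ev := (teval mul f).

Lemma mul0l (z : A) : mul 0 z = 0.
Proof.
case: model => [[[L _] _] _]; have := L 1 0 0 z; rewrite scale1r addr0 scale1r.
by move=> E; apply: (@addrI _ (mul 0 z)); rewrite addr0 -E.
Qed.

Lemma mul0r (z : A) : mul z 0 = 0.
Proof.
case: model => [[[_ R] _] _]; have := R 1 0 0 z; rewrite scale1r addr0 scale1r.
by move=> E; apply: (@addrI _ (mul z 0)); rewrite addr0 -E.
Qed.

Lemma mulDl (x y z : A) : mul (x + y) z = mul x z + mul y z.
Proof. by case: model => [[[L _] _] _]; have := L 1 x y z; rewrite !scale1r. Qed.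

Lemma mulZl a (x z : A) : mul (a *: x) z = a *: mul x z.
Proof. by case: model => [[[L _] _] _]; have := L a x 0 z; rewrite !addr0 mul0l addr0. Qed.

Lemma mulDr (x y z : A) : mul z (x + y) = mul z x + mul z y.
Proof. by case: model => [[[_ R] _] _]; have := R 1 x y z; rewrite !scale1r. Qed.

Lemma mulZr a (x z : A) : mul z (a *: x) = a *: mul z x.
Proof. by case: model => [[[_ R] _] _]; have := R a x 0 z; rewrite !addr0 mul0r addr0. Qed.

Lemma teval_parity t : Apar (tparity t) (ev t).
Proof.
case: model => [[_ [[_ [_ [_ [_ mulP]]]] _]] fP].
by elim: t => [x|u IHu v IHv] //=; apply: mulP.
Qed.

Lemma teval_rcomm u v w :
  ev (Prod (Prod u v) w) = sgn (tparity v && tparity w) *: ev (Prod (Prod u w) v).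
Proof.
case: model => [[_ [_ [_ rcomm]]] _] /=.
exact: rcomm (teval_parity u) (teval_parity v) (teval_parity w).
Qed.

Lemma teval_lsymm u v w :
  ev (Prod u (Prod v w)) - ev (Prod (Prod u v) w) =
  sgn (tparity u && tparity v) *: (ev (Prod v (Prod u w)) - ev (Prod (Prod v u) w)).
Proof.
case: model => [[_ [_ [lsymm _]]] _] /=.
exact: lsymm (teval_parity u) (teval_parity v) (teval_parity w).
Qed.

End Model.

Definition lcomb := seq (k * term X).

Definition lc_eval (A : lmodType k) (mul : A -> A -> A) (f : X -> A) (e : lcomb) : A :=
  \sum_(p <- e) p.1 *: teval mul f p.2.

Definition lc_eq (e1 e2 : lcomb) := forall A mul Apar f,
  @gdn_model A mul Apar f -> lc_eval mul f e1 = lc_eval mul f e2.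

Definition lc_scale (c : k) (e : lcomb) : lcomb := [seq (c * p.1, p.2) | p <- e].

Fixpoint all_terms (P : term X -> Prop) (e : lcomb) : Prop :=
  if e is p :: e' then P p.2 /\ all_terms P e' else True.

Definition spanned (P : term X -> Prop) (e : lcomb) :=
  exists2 e', all_terms P e' & lc_eq e e'.

Definition spans (P : term X -> Prop) (t : term X) := spanned P [:: (1, t)].

Definition equiv_mod (P : term X -> Prop) (t : term X) (c : k) (t' : term X) :=
  spanned P [:: (1, t); (- c, t')].

Definition eq_scaled (t : term X) (c : k) (t' : term X) := forall A mul Apar f,
  @gdn_model A mul Apar f -> teval mul f t = c *: teval mul f t'.

Section LinearCombinations.
Variables (A : lmodType k) (mul : A -> A -> A) (f : X -> A).

Lemma lc_eval_cons p e : lc_eval mul f (p :: e) = p.1 *: teval mul f p.2 + lc_eval mul f e.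
Proof. by rewrite /lc_eval big_cons. Qed.

Lemma lc_eval1 c t : lc_eval mul f [:: (c, t)] = c *: teval mul f t.
Proof. by rewrite /lc_eval big_seq1. Qed.

Lemma lc_eval2 c t c' t' :
  lc_eval mul f [:: (c, t); (c', t')] = c *: teval mul f t + c' *: teval mul f t'.
Proof. by rewrite lc_eval_cons lc_eval1. Qed.

Lemma lc_eval_cat e1 e2 : lc_eval mul f (e1 ++ e2) = lc_eval mul f e1 + lc_eval mul f e2.
Proof. by rewrite /lc_eval big_cat. Qed.

Lemma lc_eval_scale c e : lc_eval mul f (lc_scale c e) = c *: lc_eval mul f e.
Proof.
rewrite /lc_eval big_map scaler_sumr; apply: eq_bigr => p _.
by rewrite scalerA.
Qed.

End LinearCombinations.

Lemma all_terms_cat P e1 e2 : all_terms P e1 -> all_terms P e2 -> all_terms P (e1 ++ e2).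
Proof. by elim: e1 => //= p e1 IH [? ?] ?; split => //; apply: IH. Qed.

Lemma all_terms_scale P c e : all_terms P e -> all_terms P (lc_scale c e).
Proof. by elim: e => //= p e IH [? ?]; split => //; apply: IH. Qed.

Lemma all_terms_map P Q (g : term X -> term X) e :
  (forall u, P u -> Q (g u)) -> all_terms P e -> all_terms Q [seq (p.1, g p.2) | p <- e].
Proof. by move=> PQ; elim: e => //= p e IH [? ?]; split; [apply: PQ | apply: IH]. Qed.

Lemma all_terms_mono (P Q : term X -> Prop) e :
  (forall u, P u -> Q u) -> all_terms P e -> all_terms Q e.
Proof. by move=> PQ; elim: e => //= p e IH [? ?]; split; [apply: PQ | apply: IH]. Qed.

Lemma all_terms_nth P e p0 i : all_terms P e -> (i < size e)%N -> P (nth p0 e i).2.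
Proof. by elim: e i => [|p e IH] [|i] //= [Pp Pe] //; apply: IH. Qed.

Lemma spanned_nil P : spanned P [::].
Proof. by exists [::]. Qed.

Lemma spanned_cat P e1 e2 : spanned P e1 -> spanned P e2 -> spanned P (e1 ++ e2).
Proof.
move=> [e1' P1 E1] [e2' P2 E2]; exists (e1' ++ e2'); first exact: all_terms_cat.
by move=> A mul Apar f M; rewrite !lc_eval_cat (E1 _ _ _ _ M) (E2 _ _ _ _ M).
Qed.

Lemma spanned_scale P c e : spanned P e -> spanned P (lc_scale c e).
Proof.
move=> [e' Pe E]; exists (lc_scale c e'); first exact: all_terms_scale.
by move=> A mul Apar f M; rewrite !lc_eval_scale (E _ _ _ _ M).
Qed.

Lemma spanned_lc_eq P e e' : lc_eq e e' -> spanned P e' -> spanned P e.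
Proof.
move=> E [e'' Pe E']; exists e'' => // A mul Apar f M.
by rewrite (E _ _ _ _ M) (E' _ _ _ _ M).
Qed.

Lemma spanned_mono (P Q : term X -> Prop) e :
  (forall u, P u -> Q u) -> spanned P e -> spanned Q e.
Proof.
by move=> PQ [e' Pe E]; exists e' => //; apply: all_terms_mono Pe.
Qed.

Lemma spans_term (P : term X -> Prop) t : P t -> spans P t.
Proof. by move=> Pt; exists [:: (1, t)]. Qed.

Lemma spanned_trans (P Q : term X -> Prop) e :
  spanned P e -> (forall u, P u -> spans Q u) -> spanned Q e.
Proof.
move=> [e' Pe E] PQ; apply: (spanned_lc_eq E) => {E e}.
elim: e' Pe => [|p e IH] /= => [_|[Pp Pe]]; first exact: spanned_nil.
rewrite -cat1s; apply: spanned_cat; last exact: IH.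
apply: spanned_lc_eq (spanned_scale p.1 (PQ _ Pp)) => A mul Apar f _.
by rewrite /= lc_eval1 mulr1 /lc_eval big_seq1.
Qed.

Lemma eq_scaled_refl t : eq_scaled t 1 t.
Proof. by move=> *; rewrite scale1r. Qed.

Lemma eq_scaled_trans t c t' d t'' :
  eq_scaled t c t' -> eq_scaled t' d t'' -> eq_scaled t (c * d) t''.
Proof. by move=> E1 E2 A mul Apar f M; rewrite (E1 _ _ _ _ M) (E2 _ _ _ _ M) scalerA. Qed.

Lemma eq_scaled_sym t c t' : c != 0 -> eq_scaled t c t' -> eq_scaled t' c^-1 t.
Proof. by move=> c0 E A mul Apar f M; rewrite (E _ _ _ _ M) scalerA mulVf // scale1r. Qed.

Lemma equiv_mod_eq_scaled P t c t' : eq_scaled t c t' -> equiv_mod P t c t'.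
Proof.
move=> E; apply: spanned_lc_eq (spanned_nil P) => A mul Apar f M.
by rewrite lc_eval2 (E _ _ _ _ M) scale1r scaleNr subrr /lc_eval big_nil.
Qed.

Lemma equiv_mod_refl P t : equiv_mod P t 1 t.
Proof. exact/equiv_mod_eq_scaled/eq_scaled_refl. Qed.

Lemma equiv_mod_mono (P Q : term X -> Prop) t c t' :
  (forall u, P u -> Q u) -> equiv_mod P t c t' -> equiv_mod Q t c t'.
Proof. exact: spanned_mono. Qed.

Lemma equiv_mod_trans P t c t' d t'' :
  equiv_mod P t c t' -> equiv_mod P t' d t'' -> equiv_mod P t (c * d) t''.
Proof.
move=> E1 E2; apply: spanned_lc_eq (spanned_cat E1 (spanned_scale c E2)) => A mul Apar f _.
rewrite lc_eval_cat /= !lc_eval2 !scale1r mulr1 mulrN -addrA.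
by rewrite !scaleNr addKr.
Qed.

Lemma equiv_mod_sym P t c t' : c != 0 -> equiv_mod P t c t' -> equiv_mod P t' c^-1 t.
Proof.
move=> c_neq0 E; apply: spanned_lc_eq (spanned_scale (- c^-1) E) => A mul Apar f _.
by rewrite /= !lc_eval2 mulr1 mulrN mulNr opprK mulVf // scale1r addrC.
Qed.

Lemma equiv_mod_spans P t c t' : equiv_mod P t c t' -> spans P t' -> spans P t.
Proof.
move=> E S; apply: spanned_lc_eq (spanned_cat E (spanned_scale c S)) => A mul Apar f _.
by rewrite lc_eval_cat /= lc_eval2 !lc_eval1 mulr1 scaleNr addrNK.
Qed.

(* This is the only place where the characteristic of [k] matters. *)
Lemma spans_of_equiv_mod_opp P t c t' : (2%:R : k) != 0 ->
  equiv_mod P t c t' -> equiv_mod P t (- c) t' -> spans P t.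
Proof.
move=> two_neq0 E1 E2.
apply: spanned_lc_eq (spanned_scale 2%:R^-1 (spanned_cat E1 E2)) => A mul Apar f _.
rewrite lc_eval_scale lc_eval_cat !lc_eval2 lc_eval1 opprK scaleNr addrACA addNr addr0.
by rewrite -scalerDl scalerA -[1 + 1](natrD _ 1 1) mulVf.
Qed.


Definition rroot (v : term X) : nat := if v is Letter _ then 1 else troot v.

Lemma troot_Prod u v : troot (Prod u v) = (troot u + rroot v)%N.
Proof. by case: v => [x|? ?] /=; rewrite ?addn1. Qed.

Lemma rroot_ge v : (troot v <= rroot v)%N.
Proof. by case: v. Qed.

Lemma tlen_gt0 u : (0 < tlen u)%N.
Proof. by elim: u => //= u IH v _; rewrite addn_gt0 IH. Qed.

Lemma troot_lt_tlen t : (troot t < tlen t)%N.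
Proof.
elim: t => // u IHu v IHv; rewrite troot_Prod /=.
have : (rroot v <= tlen v)%N by case: v IHv => //= *; apply: ltnW.
lia.
Qed.

Lemma rroot_mono v v' : tlen v = tlen v' -> (troot v <= troot v')%N -> (rroot v <= rroot v')%N.
Proof.
case: v => [x|v1 v2]; case: v' => [x'|v1' v2'] //=.
  by have := tlen_gt0 v1'; have := tlen_gt0 v2'; lia.
by have := tlen_gt0 v1; have := tlen_gt0 v2; lia.
Qed.

(* A block [(s, l)] stands for the simple term [s_1, ..., s_m, l]_R; the letters
   of [s] are exactly those that enter the chain of a tableau. *)
Definition block := (seq X * X)%type.
Implicit Types (b : block) (bs : seq block).

Definition bterm (b : block) : term X :=
  foldr (fun x acc => Prod (Letter x) acc) (Letter b.2) b.1.

Definition lprod (y : term X) (bs : seq block) : term X :=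
  foldl (fun acc b => Prod acc (bterm b)) y bs.

Definition pretab (a : X) (bs : seq block) : term X := lprod (Letter a) bs.

Definition blen (bs : seq block) : nat := sumn [seq (size b.1).+1 | b <- bs].

Definition sized (N r : nat) (u : term X) := tlen u = N /\ (r <= troot u)%N.

Lemma tlen_bterm b : tlen (bterm b) = (size b.1).+1.
Proof. by case: b => s l; elim: s => //= x s ->. Qed.

Lemma rroot_bterm b : rroot (bterm b) = 1%N.
Proof.
by case: b => [[|x s] l] //=; elim: s x.
Qed.

Lemma tparity_bterm b : tparity (bterm b) = parity b.1 (+) par b.2.
Proof. by case: b => s l; elim: s => //= x s ->; rewrite parity_cons addbA. Qed.

Lemma lprod_cat y bs1 bs2 : lprod y (bs1 ++ bs2) = lprod (lprod y bs1) bs2.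
Proof. exact: foldl_cat. Qed.

Lemma pretab_rcons a bs b : pretab a (rcons bs b) = Prod (pretab a bs) (bterm b).
Proof. by rewrite /pretab -cats1 lprod_cat. Qed.

Lemma troot_lprod y bs : troot (lprod y bs) = (troot y + size bs)%N.
Proof.
elim: bs y => [|b bs IH] y /=; first by rewrite addn0.
by rewrite IH troot_Prod rroot_bterm; lia.
Qed.

Lemma tlen_lprod y bs : tlen (lprod y bs) = (tlen y + blen bs)%N.
Proof.
elim: bs y => [|b bs IH] y /=; first by rewrite addn0.
by rewrite IH /= tlen_bterm /blen /=; lia.
Qed.

Lemma blen_cat bs1 bs2 : blen (bs1 ++ bs2) = (blen bs1 + blen bs2)%N.
Proof. by rewrite /blen map_cat sumn_cat. Qed.

Lemma tlen_pretab a bs : tlen (pretab a bs) = (blen bs).+1.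
Proof. by rewrite tlen_lprod. Qed.

Lemma troot_pretab a bs : troot (pretab a bs) = size bs.
Proof. by rewrite troot_lprod. Qed.

Definition lc_prodl (w : term X) (e : lcomb) : lcomb := [seq (p.1, Prod p.2 w) | p <- e].
Definition lc_prodr (w : term X) (e : lcomb) : lcomb := [seq (p.1, Prod w p.2) | p <- e].

Lemma lc_eval_prodl A mul Apar f w e : @gdn_model A mul Apar f ->
  lc_eval mul f (lc_prodl w e) = mul (lc_eval mul f e) (teval mul f w).
Proof.
move=> M; elim: e => [|p e IH]; first by rewrite /lc_eval !big_nil (mul0l M).
by rewrite /= !lc_eval_cons IH (mulDl M) (mulZl M).
Qed.

Lemma lc_eval_prodr A mul Apar f w e : @gdn_model A mul Apar f ->
  lc_eval mul f (lc_prodr w e) = mul (teval mul f w) (lc_eval mul f e).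
Proof.
move=> M; elim: e => [|p e IH]; first by rewrite /lc_eval !big_nil (mul0r M).
by rewrite /= !lc_eval_cons IH (mulDr M) (mulZr M).
Qed.

Lemma spanned_prodl (P Q : term X -> Prop) w e :
  (forall v, P v -> Q (Prod v w)) -> spanned P e -> spanned Q (lc_prodl w e).
Proof.
move=> PQ [e' Pe E]; exists (lc_prodl w e'); first exact: (all_terms_map (g := Prod^~ w) PQ Pe).
by move=> A mul Apar f M; rewrite !(lc_eval_prodl _ _ M) (E _ _ _ _ M).
Qed.

Lemma spanned_prodr (P Q : term X -> Prop) w e :
  (forall v, P v -> Q (Prod w v)) -> spanned P e -> spanned Q (lc_prodr w e).
Proof.
move=> PQ [e' Pe E]; exists (lc_prodr w e'); first exact: (all_terms_map (g := Prod w) PQ Pe).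
by move=> A mul Apar f M; rewrite !(lc_eval_prodr _ _ M) (E _ _ _ _ M).
Qed.

Lemma equiv_mod_prodl N r t c t' w : equiv_mod (sized N r) t c t' ->
  equiv_mod (sized (N + tlen w) (r + rroot w)) (Prod t w) c (Prod t' w).
Proof.
apply: (spanned_prodl (e := [:: (1, t); (- c, t')])) => v [lenv rootv].
by split; [rewrite /= lenv | rewrite troot_Prod leq_add2r].
Qed.

Lemma equiv_mod_prodr N r t c t' w : equiv_mod (sized N r) t c t' ->
  equiv_mod (sized (tlen w + N) (troot w + r)) (Prod w t) c (Prod w t').
Proof.
apply: (spanned_prodr (e := [:: (1, t); (- c, t')])) => v [lenv rootv].
by split; [rewrite /= lenv | rewrite troot_Prod leq_add2l (leq_trans rootv (rroot_ge v))].
Qed.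

Lemma equiv_mod_lprod N r t c t' bs : equiv_mod (sized N r) t c t' ->
  equiv_mod (sized (N + blen bs) (r + size bs)) (lprod t bs) c (lprod t' bs).
Proof.
elim: bs N r t t' => [|b bs IH] N r t t' E /=; first by rewrite !addn0.
have := IH _ _ _ _ (equiv_mod_prodl (bterm b) E).
by rewrite tlen_bterm rroot_bterm /blen /= -!addnA addSnnS.
Qed.

Lemma eq_scaled_lprod t c t' bs : eq_scaled t c t' -> eq_scaled (lprod t bs) c (lprod t' bs).
Proof.
elim: bs t t' => [|b bs IH] t t' E //=; apply: IH => A mul Apar f M.
by rewrite /= (E _ _ _ _ M) (mulZl M).
Qed.

Definition is_pretab u := exists a bs, u = pretab a bs.

Definition pretab_at N r u := is_pretab u /\ sized N r u.

Lemma pretab_at_pretab a bs : pretab_at (blen bs).+1 (size bs) (pretab a bs).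
Proof. by split; [exists a, bs | rewrite /sized tlen_pretab troot_pretab]. Qed.

Lemma pretab_at_weaken N N' r r' u :
  N = N' -> (r' <= r)%N -> pretab_at N r u -> pretab_at N' r' u.
Proof. by move=> <- le_r [pu [lenu rootu]]; do 2!split=> //; apply: leq_trans rootu. Qed.

Lemma pretab_at_prod N r v b :
  pretab_at N r v -> pretab_at (N + (size b.1).+1) r.+1 (Prod v (bterm b)).
Proof.
move=> [[a [bs ->]] [lenv rootv]]; split; first by exists a, (rcons bs b); rewrite pretab_rcons.
by split; [rewrite /= lenv tlen_bterm | rewrite troot_Prod rroot_bterm addn1].
Qed.

Section LeftNormalization.
Variable n : nat.
Hypothesis IHn : forall t, (tlen t < n)%N -> spans (pretab_at (tlen t) (troot t)) t.

Lemma spans_pretab_rcomm u b v : (tlen (Prod (Prod u (bterm b)) v) <= n)%N ->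
  spans (pretab_at (tlen (Prod (Prod u (bterm b)) v)) (troot (Prod (Prod u (bterm b)) v)))
    (Prod (Prod u (bterm b)) v).
Proof.
have -> : tlen (Prod (Prod u (bterm b)) v) = (tlen (Prod u v) + (size b.1).+1)%N.
  by rewrite /= tlen_bterm; lia.
have -> : troot (Prod (Prod u (bterm b)) v) = (troot (Prod u v)).+1.
  by rewrite !troot_Prod rroot_bterm; lia.
move=> len_uv; have /IHn span_uv : (tlen (Prod u v) < n)%N by lia.
pose e : k := sgn (tparity (bterm b) && tparity v).
apply: (@spanned_lc_eq _ _ (lc_scale e (lc_prodl (bterm b) [:: (1, Prod u v)]))).
  by move=> A mul Apar f M; rewrite /= !lc_eval1 mulr1 scale1r (teval_rcomm M).
exact/spanned_scale/(spanned_prodl (@pretab_at_prod _ _ ^~ b) span_uv).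
Qed.

(* Left symmetry: [a (v s) = (a v) s + e (v (a s) - (v a) s)]; the last two
   terms are pretableaux, and [a v] is shorter. *)
Lemma spans_letter_pretab a c bs b :
  let u := Prod (Letter a) (pretab c (rcons bs b)) in
  (tlen u <= n)%N -> spans (pretab_at (tlen u) (troot u)) u.
Proof.
move=> u; rewrite {}/u pretab_rcons; set v := pretab c bs; set s := bterm b.
have -> : tlen (Prod (Letter a) (Prod v s)) = (blen bs + (size b.1).+1).+2.
  by rewrite /= tlen_pretab tlen_bterm; lia.
have -> : troot (Prod (Letter a) (Prod v s)) = (size bs).+1.
  rewrite (troot_Prod (Letter a)); change (troot (Prod v s) = (size bs).+1).
  by rewrite troot_Prod rroot_bterm troot_pretab addn1.
move=> len_u; pose e : k := sgn (par a && tparity v).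
have /IHn span_av : (tlen (Prod (Letter a) v) < n)%N by rewrite /= tlen_pretab; lia.
have lsymm : lc_eq [:: (1, Prod (Letter a) (Prod v s))]
    ([:: (1, Prod (Prod (Letter a) v) s)] ++ [:: (e * 1, Prod v (Prod (Letter a) s))]
     ++ [:: (- e * 1, Prod (Prod v (Letter a)) s)]).
  move=> A mul Apar f M; rewrite !lc_eval_cat !lc_eval1 !scale1r !mulr1.
  by rewrite scaleNr -scalerBr -(teval_lsymm M (Letter a)) addrC subrK.
apply: (spanned_lc_eq lsymm); apply: spanned_cat; last apply: spanned_cat.
- apply: spanned_prodl span_av => w /(@pretab_at_prod _ _ _ b).
  apply: pretab_at_weaken; first by rewrite /= tlen_pretab; lia.
  by rewrite (troot_Prod (Letter a)) ltnS; apply: leq_trans (rroot_ge v); rewrite troot_pretab.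
- apply: (spanned_scale e (e := [:: (1, _)])); apply: spans_term.
  have := pretab_at_pretab c (rcons bs (a :: b.1, b.2)).
  rewrite pretab_rcons size_rcons; apply: pretab_at_weaken => //.
  by rewrite /blen map_rcons -cats1 sumn_cat /=; lia.
- apply: (spanned_scale (- e) (e := [:: (1, _)])); apply: spans_term.
  have := pretab_at_pretab c (bs ++ [:: ([::], a); b]).
  rewrite /pretab lprod_cat size_cat; apply: pretab_at_weaken; last by rewrite addn2.
  by rewrite blen_cat /blen /=; lia.
Qed.

Lemma spans_prod_pretab a bsu c bsv :
  let t := Prod (pretab a bsu) (pretab c bsv) in
  (tlen t <= n)%N -> spans (pretab_at (tlen t) (troot t)) t.
Proof.
move=> t; rewrite {}/t; case/lastP: bsu => [|bsu b]; first case/lastP: bsv => [|bsv b].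
- by move=> _; apply/spans_term/(pretab_at_pretab a [:: ([::], c)]).
- exact: spans_letter_pretab.
- by rewrite /= pretab_rcons; apply: spans_pretab_rcomm.
Qed.

End LeftNormalization.

Lemma spans_pretab_at t : spans (pretab_at (tlen t) (troot t)) t.
Proof.
have [n] := ubnP (tlen t); elim: n t => // n IHn t /ltnSE.
case: t => [a|u v] len_uv; first exact/spans_term/(pretab_at_pretab a [::]).
have len_u : (tlen u < n)%N by move: len_uv => /=; have := tlen_gt0 v; lia.
have len_v : (tlen v < n)%N by move: len_uv => /=; have := tlen_gt0 u; lia.
pose Qv w := exists2 v', pretab_at (tlen v) (troot v) v' & w = Prod u v'.
apply: (spanned_trans (spanned_prodr (Q := Qv) _ (IHn v len_v))) => [v0 ?|]; first by exists v0.
move=> _ [_ [[c [bsv ->]] [len_v' root_v']] ->].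
pose Qu w := exists2 u', pretab_at (tlen u) (troot u) u' & w = Prod u' (pretab c bsv).
apply: (spanned_trans (spanned_prodl (Q := Qu) _ (IHn u len_u))) => [u0 ?|]; first by exists u0.
move=> _ [_ [[a [bsu ->]] [len_u' root_u']] ->].
have len_t : tlen (Prod (pretab a bsu) (pretab c bsv)) = tlen (Prod u v).
  by rewrite /= len_u' len_v'.
apply: spanned_mono (spans_prod_pretab IHn _) => [w|]; last by rewrite len_t.
apply: pretab_at_weaken => //; rewrite !troot_Prod leq_add //.
by apply: rroot_mono => //; rewrite len_v'.
Qed.

(* Pretableaux with block keys [K] have length [(klen K).+1] and root number
   [size K]; they are rearranged modulo [above K]. *)
Definition bkey b : nat * X := (size b.1, b.2).

Definition klen (K : seq (nat * X)) : nat := sumn [seq p.1.+1 | p <- K].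

Definition above (K : seq (nat * X)) : term X -> Prop := sized (klen K).+1 (size K).+1.

Lemma klen_cons p K : klen (p :: K) = (p.1.+1 + klen K)%N.
Proof. by []. Qed.

Lemma klen_bkey bs : klen (map bkey bs) = blen bs.
Proof. by rewrite /klen -map_comp. Qed.

Lemma equiv_mod_sized_above N r K t c t' : N = (klen K).+1 -> r = (size K).+1 ->
  equiv_mod (sized N r) t c t' -> equiv_mod (above K) t c t'.
Proof. by move=> -> ->. Qed.

Lemma equiv_mod_lsymm_letters x z w :
  equiv_mod (sized (tlen w).+2 (rroot w).+1) (Prod (Letter x) (Prod (Letter z) w))
    (sgn (par x && par z)) (Prod (Letter z) (Prod (Letter x) w)).
Proof.
pose e : k := sgn (par x && par z).
apply: (@spanned_lc_eq _ _ [:: (1, Prod (Prod (Letter x) (Letter z)) w);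
                             (- e, Prod (Prod (Letter z) (Letter x)) w)]).
  move=> A mul Apar f M; rewrite !lc_eval2 !scale1r !scaleNr.
  have := teval_lsymm M (Letter x) (Letter z) w; rewrite /= scalerBr.
  set X1 := mul _ (mul _ _); set X2 := mul (mul _ _) _ => LS.
  by rewrite -[X1](subrK X2) LS addrAC [_ - _ - _]addrAC subrr add0r addrC.
by exists [:: (1, Prod (Prod (Letter x) (Letter z)) w);
             (- e, Prod (Prod (Letter z) (Letter x)) w)] => //; do !split; rewrite troot_Prod.
Qed.

Lemma equiv_mod_bterm_swap q x z r l :
  equiv_mod (sized (size q + size r).+3 2) (bterm (q ++ x :: z :: r, l))
    (sgn (par x && par z)) (bterm (q ++ z :: x :: r, l)).
Proof.
elim: q => [|y q IH].
  by have := equiv_mod_lsymm_letters x z (bterm (r, l)); rewrite tlen_bterm rroot_bterm.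
by have := equiv_mod_prodr (Letter y) IH; rewrite /= add1n.
Qed.

Lemma equiv_mod_block_swap a q x z r l bs :
  equiv_mod (above (((size q + size r).+2, l) :: map bkey bs))
    (pretab a ((q ++ x :: z :: r, l) :: bs)) (sgn (par x && par z))
    (pretab a ((q ++ z :: x :: r, l) :: bs)).
Proof.
apply: equiv_mod_sized_above
  (equiv_mod_lprod bs (equiv_mod_prodr (Letter a) (equiv_mod_bterm_swap q x z r l))).
  by rewrite klen_cons klen_bkey /=; lia.
by rewrite /= size_map; lia.
Qed.

Lemma equiv_mod_block_front a q x r l bs :
  equiv_mod (above (((size q + size r).+1, l) :: map bkey bs))
    (pretab a ((q ++ x :: r, l) :: bs)) (sgn (par x && parity q))
    (pretab a ((x :: q ++ r, l) :: bs)).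
Proof.
elim/last_ind: q r => [|q y IH] r; first by rewrite andbF; apply: equiv_mod_refl.
rewrite size_rcons -cats1 -!catA /= addSn.
have := IH (y :: r); rewrite /= addnS => IHy.
have := equiv_mod_trans (equiv_mod_block_swap a q y x r l bs) IHy.
rewrite -sgnD parity_cat /parity /=.
by case: (par x); case: (par y); case: (odd _).
Qed.

Lemma equiv_mod_head_swap a z s l bs :
  equiv_mod (above (((size s).+1, l) :: map bkey bs))
    (pretab a ((z :: s, l) :: bs)) (sgn (par a && par z)) (pretab z ((a :: s, l) :: bs)).
Proof.
apply: equiv_mod_sized_above (equiv_mod_lprod bs (equiv_mod_lsymm_letters a z (bterm (s, l)))).
  by rewrite klen_cons klen_bkey tlen_bterm /=; lia.
by rewrite rroot_bterm /= size_map; lia.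
Qed.

Lemma equiv_mod_head_swap_block a q x r l bs :
  equiv_mod (above (((size q + size r).+1, l) :: map bkey bs))
    (pretab a ((q ++ x :: r, l) :: bs))
    (sgn ((par a && par x) (+) ((par a (+) par x) && parity q)))
    (pretab x ((q ++ a :: r, l) :: bs)).
Proof.
have to_front := equiv_mod_block_front a q x r l bs.
have swap := equiv_mod_head_swap a x (q ++ r) l bs; rewrite size_cat in swap.
have from_front := equiv_mod_sym (sgn_neq0 _) (equiv_mod_block_front x q a r l bs).
have := equiv_mod_trans (equiv_mod_trans to_front swap) from_front.
rewrite sgnV -!sgnD; congr (equiv_mod _ _ (sgn _) _).
by case: (par a); case: (par x); case: (parity q).
Qed.

Definition bparity b := parity b.1 (+) par b.2.

Lemma eq_scaled_lprod_swap y bs1 b1 b2 bs2 :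
  eq_scaled (lprod y (bs1 ++ b1 :: b2 :: bs2)) (sgn (bparity b1 && bparity b2))
    (lprod y (bs1 ++ b2 :: b1 :: bs2)).
Proof.
rewrite !lprod_cat; apply: (eq_scaled_lprod (t := Prod (Prod (lprod y bs1) (bterm b1)) _)).
by move=> A mul Apar f M; rewrite (teval_rcomm M) !tparity_bterm.
Qed.

Definition blocks_parity bs : bool := foldr (fun b acc => bparity b (+) acc) false bs.

Lemma eq_scaled_lprod_front y bs1 b bs2 :
  eq_scaled (lprod y (bs1 ++ b :: bs2)) (sgn (bparity b && blocks_parity bs1))
    (lprod y (b :: bs1 ++ bs2)).
Proof.
elim: bs1 y => [|b1 bs1 IH] y /=; first by rewrite andbF; apply: eq_scaled_refl.
have := eq_scaled_trans (IH (Prod y (bterm b1))) (eq_scaled_lprod_swap y [::] b1 b (bs1 ++ bs2)).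
by rewrite -sgnD; case: (bparity b); case: (bparity b1); case: (blocks_parity bs1).
Qed.

Lemma eq_scaled_lprod_perm y bs bs' :
  perm_eq bs bs' -> exists c, eq_scaled (lprod y bs) c (lprod y bs').
Proof.
elim: bs y bs' => [|b bs IH] y bs'.
  by rewrite perm_sym => /perm_nilP ->; exists 1; apply: eq_scaled_refl.
move=> perm_bs; have b_in : b \in bs' by rewrite -(perm_mem perm_bs) mem_head.
move: perm_bs; case/splitPr: b_in => bs1 bs2 perm_bs.
have /(IH (Prod y (bterm b))) [c E] : perm_eq bs (bs1 ++ bs2).
  by rewrite -(perm_cons b); apply: perm_trans perm_bs _; rewrite -cat1s perm_catCA.
exists (c * (sgn (bparity b && blocks_parity bs1))^-1).
exact/(eq_scaled_trans E)/eq_scaled_sym/eq_scaled_lprod_front/sgn_neq0.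
Qed.

Fixpoint blocks_of (c : seq X) (K : seq (nat * X)) : seq block :=
  if K is p :: K' then (take p.1 c, p.2) :: blocks_of (drop p.1 c) K' else [::].

Definition chain bs : seq X := flatten [seq b.1 | b <- bs].

Definition fits (c : seq X) (K : seq (nat * X)) := size c = sumn [seq p.1 | p <- K].

Lemma chain_cat bs1 bs2 : chain (bs1 ++ bs2) = chain bs1 ++ chain bs2.
Proof. by rewrite /chain map_cat flatten_cat. Qed.

Lemma fits_chain bs : fits (chain bs) (map bkey bs).
Proof. by elim: bs => //= b bs IH; rewrite /fits /chain /= size_cat -/(chain _) IH. Qed.

Lemma fits_drop c p K : fits c (p :: K) -> fits (drop p.1 c) K.
Proof. by rewrite /fits size_drop => ->; rewrite /= addKn. Qed.

Lemma blocks_of_chain bs : blocks_of (chain bs) (map bkey bs) = bs.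
Proof.
elim: bs => //= b bs IH; rewrite /chain /= take_size_cat // drop_size_cat //.
by rewrite IH; case: b.
Qed.

Lemma chain_blocks_of c K : fits c K -> chain (blocks_of c K) = c.
Proof.
elim: K c => [|p K IH] c /=; first by case: c.
move=> fit_c; rewrite /chain /= -/(chain _) IH ?cat_take_drop //; exact: fits_drop fit_c.
Qed.

Lemma bkey_blocks_of c K : fits c K -> map bkey (blocks_of c K) = K.
Proof.
elim: K c => [|[n l] K IH] c //= fit_c; rewrite IH; last exact: fits_drop fit_c.
by move: fit_c; rewrite /bkey /fits /= size_take_min => ->; rewrite (minn_idPl (leq_addr _ _)).
Qed.

Lemma size_blocks_of c K : size (blocks_of c K) = size K.
Proof. by elim: K c => //= p K IH c; rewrite IH. Qed.

Lemma blocks_of_cat_lt n l K q x r : (size q < n)%N ->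
  blocks_of (q ++ x :: r) ((n, l) :: K) =
  (q ++ x :: take (n - size q).-1 r, l) :: blocks_of (drop (n - size q).-1 r) K.
Proof.
move=> lt_q /=; rewrite take_cat drop_cat ltnNge (ltnW lt_q) /=.
by case E: (n - size q)%N => [|m]; [lia|].
Qed.

Lemma blocks_of_cat_ge n l K q x r : (n <= size q)%N ->
  blocks_of (q ++ x :: r) ((n, l) :: K) = (take n q, l) :: blocks_of (drop n q ++ x :: r) K.
Proof.
move=> ge_q /=; rewrite take_cat drop_cat.
case: ltnP => // ge_n; have -> : n = size q by lia.
by rewrite subnn take_size drop_size cats0.
Qed.

Lemma blocks_parity_blocks_of c K :
  fits c K -> blocks_parity (blocks_of c K) = parity c (+) parity [seq p.2 | p <- K].
Proof.
elim: K c => [|[n l] K IH] c /=; first by case: c.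
move=> fit_c; rewrite IH; last exact: fits_drop fit_c.
rewrite /bparity parity_cons -[in RHS](cat_take_drop n c) parity_cat /=.
by case: (par l); case: (parity _); case: (parity _); case: (parity _).
Qed.

Fixpoint chain_sign bs : bool :=
  if bs is b :: bs' then (par b.2 && parity (chain bs')) (+) chain_sign bs' else false.

Definition ctab K a c := pretab a (blocks_of c K).

Definition csign K c := chain_sign (blocks_of c K).

Lemma above_bkey c K : fits c K -> above (map bkey (blocks_of c K)) = above K.
Proof. by move/bkey_blocks_of ->. Qed.

Lemma equiv_mod_ctab_head_swap K a q x r : fits (q ++ x :: r) K ->
  equiv_mod (above K) (ctab K a (q ++ x :: r))
    (sgn (csign K (q ++ x :: r) (+) ((par a && par x) (+) ((par a (+) par x) && parity q))
          (+) csign K (q ++ a :: r)))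
    (ctab K x (q ++ a :: r)).
Proof.
elim: K q => [|[n l] K IH] q fit_x; first by move: fit_x; rewrite /fits size_cat addnS.
have fit_a : fits (q ++ a :: r) ((n, l) :: K) by move: fit_x; rewrite /fits !size_cat.
rewrite -(above_bkey fit_x) /ctab /csign.
have [lt_q | ge_q] := ltnP (size q) n.
  rewrite !blocks_of_cat_lt //=.
  have := equiv_mod_head_swap_block a q x (take (n - size q).-1 r) l
    (blocks_of (drop (n - size q).-1 r) K).
  rewrite /bkey /= size_cat addnS; congr (equiv_mod _ _ (sgn _) _).
  by rewrite !addb_xorb; btauto.
rewrite !blocks_of_cat_ge //=.
set q1 := take n q; set q2 := drop n q.
have fit_x2 : fits (q2 ++ x :: r) K.
  by move: fit_x; rewrite /fits /= !size_cat size_drop; lia.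
have fit_a2 : fits (q2 ++ a :: r) K by move: fit_x2; rewrite /fits !size_cat.
set bs_x := blocks_of (q2 ++ x :: r) K; set bs_a := blocks_of (q2 ++ a :: r) K.
have to_back := eq_scaled_lprod_front (Letter a) bs_x (q1, l) [::].
have {}to_back := eq_scaled_sym (sgn_neq0 _) to_back.
have from_back := eq_scaled_lprod_front (Letter x) bs_a (q1, l) [::].
have mid := equiv_mod_lprod [:: (q1, l)] (IH q2 fit_x2).
rewrite /ctab -/bs_x -/bs_a /pretab -!lprod_cat in mid.
rewrite !cats0 sgnV in to_back from_back.
have len_eq : ((klen K).+1 + blen [:: (q1, l)])%N = (klen (bkey (q1, l) :: map bkey bs_x)).+1.
  by rewrite klen_cons bkey_blocks_of // /blen /=; lia.
have root_eq : ((size K).+1 + size [:: (q1, l)])%N = (size (bkey (q1, l) :: map bkey bs_x)).+1.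
  by rewrite /= size_map size_blocks_of addn1.
have := equiv_mod_trans (equiv_mod_trans (equiv_mod_eq_scaled _ to_back) mid)
  (equiv_mod_eq_scaled _ from_back).
move=> /(equiv_mod_sized_above len_eq root_eq).
rewrite -!sgnD; congr (equiv_mod _ _ (sgn _) _).
rewrite /csign -/bs_x -/bs_a /bparity /= !blocks_parity_blocks_of // !chain_blocks_of //.
have -> : parity q = parity q1 (+) parity q2 by rewrite -parity_cat cat_take_drop.
rewrite !parity_cat !parity_cons.
move: (chain_sign _) (chain_sign _) (parity _) (parity _) (parity _) (parity _).
by move=> *; rewrite !addb_xorb; btauto.
Qed.


Section Chains.
Variables (x0 : X) (K : seq (nat * X)).

(* A chain [C] lists the head letter followed by the letters of the blocks
   (all but the last letter of each simple factor, cf. [tab_chain]). [x0] is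
   only a junk value for the empty chain. *)
Definition chain_tab (C : seq X) := ctab K (head x0 C) (behead C).

(* Up to the sign [csign], chain tableaux are supersymmetric in the letters of
   their chain modulo terms of larger root number. *)
Definition chain_equiv (C : seq X) (s : bool) (C' : seq X) :=
  equiv_mod (above K) (chain_tab C) (sgn (csign K (behead C) (+) s (+) csign K (behead C')))
    (chain_tab C').

Definition chain_fits (C : seq X) := size C = (sumn [seq p.1 | p <- K]).+1.

Lemma chain_equiv_refl C : chain_equiv C false C.
Proof. by rewrite /chain_equiv addbF addbb; apply: equiv_mod_refl. Qed.

Lemma chain_equiv_trans C s C' s' C'' :
  chain_equiv C s C' -> chain_equiv C' s' C'' -> chain_equiv C (s (+) s') C''.
Proof.
move=> E1 E2; have := equiv_mod_trans E1 E2; rewrite -sgnD /chain_equiv.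
congr (equiv_mod _ _ (sgn _) _).
by move: (csign _ _) (csign _ _) (csign _ _) => *; rewrite !addb_xorb; btauto.
Qed.

Lemma chain_equiv_head_swap a q x r : chain_fits (a :: q ++ x :: r) ->
  chain_equiv (a :: q ++ x :: r) ((par a && par x) (+) ((par a (+) par x) && parity q))
    (x :: q ++ a :: r).
Proof.
rewrite /chain_fits /= => -[/(equiv_mod_ctab_head_swap a)].
by rewrite /chain_equiv !addbA.
Qed.

Lemma chain_equiv_swap q x z r : chain_fits (q ++ x :: z :: r) ->
  chain_equiv (q ++ x :: z :: r) (par x && par z) (q ++ z :: x :: r).
Proof.
case: q => [|a q] fit_C /=.
  by have := chain_equiv_head_swap (q := [::]) fit_C; rewrite /= andbF addbF.
have fit1 : chain_fits (x :: (q ++ [:: a]) ++ z :: r).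
  by move: fit_C; rewrite /chain_fits /= !size_cat /=; lia.
have fit2 : chain_fits (z :: q ++ a :: x :: r).
  by move: fit_C; rewrite /chain_fits /= !size_cat /=; lia.
have E1 := chain_equiv_head_swap fit_C.
have E2 := chain_equiv_head_swap fit1; rewrite -!catA /= in E2.
have := chain_equiv_trans (chain_equiv_trans E1 E2) (chain_equiv_head_swap fit2).
congr (chain_equiv _ _ _); rewrite parity_cat parity_seq1.
by move: (par a) (par x) (par z) (parity q) => *; rewrite !addb_xorb; btauto.
Qed.

Lemma chain_equiv_move q x m r : chain_fits (q ++ x :: m ++ r) ->
  chain_equiv (q ++ x :: m ++ r) (par x && parity m) (q ++ m ++ x :: r).
Proof.
elim: m q => [|y m IH] q fit_C; first by rewrite andbF; apply: chain_equiv_refl.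
have fit' : chain_fits ((q ++ [:: y]) ++ x :: m ++ r).
  by move: fit_C; rewrite /chain_fits !size_cat /= !size_cat; lia.
have E := IH _ fit'; rewrite -!catA /= in E.
have := chain_equiv_trans (chain_equiv_swap fit_C) E.
congr (chain_equiv _ _ _); rewrite parity_cons.
by move: (par x) (par y) (parity m) => *; rewrite !addb_xorb; btauto.
Qed.

Lemma chain_equiv_swap_segments q m1 m2 r : chain_fits (q ++ m1 ++ m2 ++ r) ->
  chain_equiv (q ++ m1 ++ m2 ++ r) (parity m1 && parity m2) (q ++ m2 ++ m1 ++ r).
Proof.
elim: m1 q => [|x m1 IH] q fit_C /=; first by apply: chain_equiv_refl.
have fit1 : chain_fits ((q ++ [:: x]) ++ m1 ++ m2 ++ r) by rewrite -catA.
have fit2 : chain_fits (q ++ x :: m2 ++ m1 ++ r).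
  by move: fit_C; rewrite /chain_fits !size_cat /= !size_cat; lia.
have := IH _ fit1; rewrite -!catA /= => E.
have := chain_equiv_trans E (chain_equiv_move fit2).
congr (chain_equiv _ _ _); rewrite parity_cons.
by move: (par x) (parity m1) (parity m2) => *; rewrite !addb_xorb; btauto.
Qed.

Lemma chain_equiv_perm q C C' : chain_fits (q ++ C) -> perm_eq C C' ->
  exists s, chain_equiv (q ++ C) s (q ++ C').
Proof.
elim: C q C' => [|x C IH] q C' fit_C.
  by rewrite perm_sym => /perm_nilP ->; exists false; apply: chain_equiv_refl.
move=> perm_C; have x_in : x \in C' by rewrite -(perm_mem perm_C) mem_head.
move: perm_C; case/splitPr: x_in => C1 C2 perm_C.
have perm_C' : perm_eq C (C1 ++ C2).
  by rewrite -(perm_cons x); apply: perm_trans perm_C _; rewrite -cat1s perm_catCA.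
have fit1 : chain_fits ((q ++ [:: x]) ++ C) by rewrite -catA.
have [s E] := IH _ _ fit1 perm_C'; rewrite -!catA /= in E.
have fit2 : chain_fits (q ++ x :: C1 ++ C2).
  by move: fit_C; rewrite /chain_fits !size_cat /= (perm_size perm_C') size_cat.
by exists (s (+) (par x && parity C1)); apply: chain_equiv_trans E (chain_equiv_move fit2).
Qed.

Lemma spans_chain_dup q o m r : (2%:R : k) != 0 -> par o ->
  chain_fits (q ++ o :: m ++ o :: r) -> spans (above K) (chain_tab (q ++ o :: m ++ o :: r)).
Proof.
move=> two_neq0 odd_o fit_C.
have fit' : chain_fits ((q ++ m) ++ o :: o :: r).
  by move: fit_C; rewrite /chain_fits !size_cat /= !size_cat /=; lia.
have := chain_equiv_swap fit'; rewrite -catA odd_o /chain_equiv addbC addbA addbb /= => E.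
apply: equiv_mod_spans (chain_equiv_move fit_C) _.
apply: spans_of_equiv_mod_opp two_neq0 (equiv_mod_refl _ _) _.
by rewrite /sgn in E.
Qed.

End Chains.

Lemma chain_sign_cat bs1 bs2 : chain_sign (bs1 ++ bs2) =
  chain_sign bs1 (+) (parity [seq b.2 | b <- bs1] && parity (chain bs2)) (+) chain_sign bs2.
Proof.
elim: bs1 => [|b bs1 IH] //=.
rewrite IH chain_cat parity_cat parity_cons.
move: (par b.2) (parity (chain bs1)) (parity (chain bs2)) (chain_sign bs1) (chain_sign bs2).
by move: (parity _) => *; rewrite !addb_xorb; btauto.
Qed.

(* The two factors can be exchanged by right commutativity or by exchanging their
   segments of the chain; since [l] is odd, the two signs are opposite. *)
Lemma spans_twin_odd_blocks a bs1 s s' l bs2 : (2%:R : k) != 0 ->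
  size s = size s' -> par l ->
  spans (above (map bkey (bs1 ++ (s, l) :: (s', l) :: bs2)))
    (pretab a (bs1 ++ (s, l) :: (s', l) :: bs2)).
Proof.
move=> two_neq0 size_s odd_l; set bs := bs1 ++ _; set bs' := bs1 ++ (s', l) :: (s, l) :: bs2.
set K := map bkey bs.
have key_bs' : map bkey bs' = K by rewrite /K /bs !map_cat /= /bkey /= size_s.
have fit_bs := fits_chain bs.
have tab_bs : chain_tab a K (a :: chain bs) = pretab a bs.
  by rewrite /chain_tab /ctab blocks_of_chain.
have tab_bs' : chain_tab a K (a :: chain bs') = pretab a bs'.
  by rewrite /chain_tab /ctab /= -key_bs' blocks_of_chain.
have chain_bs : chain bs = chain bs1 ++ s ++ s' ++ chain bs2 by rewrite chain_cat.
have chain_bs' : chain bs' = chain bs1 ++ s' ++ s ++ chain bs2 by rewrite chain_cat.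
have fit_C : chain_fits K ((a :: chain bs1) ++ s ++ s' ++ chain bs2).
  by rewrite /chain_fits /= -chain_bs fit_bs.
have := chain_equiv_swap_segments a fit_C.
rewrite /chain_equiv /= -chain_bs -chain_bs' tab_bs tab_bs' /csign blocks_of_chain.
rewrite -key_bs' blocks_of_chain => E.
apply: spans_of_equiv_mod_opp two_neq0 E _.
apply/equiv_mod_eq_scaled => A mul Apar f M.
rewrite (eq_scaled_lprod_swap _ _ _ _ _ M) sgnN; congr (sgn _ *: _).
rewrite /bs /bs' !chain_sign_cat /= /bparity odd_l !parity_cat.
move: (chain_sign bs1) (chain_sign bs2) (parity (chain bs2)) (parity [seq b.2 | b <- bs1]).
by move: (parity s) (parity s') => *; rewrite !addb_xorb; btauto.
Qed.

Definition tab_pair b : X * seq X :=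
  if b.1 is x :: s then (x, rcons s b.2) else (b.2, [::]).

Lemma size_tab_pair b : size (tab_pair b).2 = size b.1.
Proof. by case: b => [[|x s] l] //=; rewrite size_rcons. Qed.

Lemma last_tab_pair b : last (tab_pair b).1 (tab_pair b).2 = b.2.
Proof. by case: b => [[|x s] l] //=; rewrite last_rcons. Qed.

Lemma belast_tab_pair b : belast (tab_pair b).1 (tab_pair b).2 = b.1.
Proof. by case: b => [[|x s] l] //=; rewrite belast_rcons. Qed.

Lemma simple_term_tab_pair b : simple_term (tab_pair b).1 (tab_pair b).2 = bterm b.
Proof. by case: b => [[|x s] l] //=; elim: s x => //= y s IH x; rewrite IH. Qed.

Lemma tab_term_pretab a bs : tab_term a (map tab_pair bs) = pretab a bs.
Proof.
rewrite /tab_term /pretab /lprod; elim: bs (Letter a) => //= b bs IH y.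
by rewrite simple_term_tab_pair IH.
Qed.

Lemma tab_chain_pretab a bs : tab_chain a (map tab_pair bs) = a :: chain bs.
Proof.
rewrite /tab_chain /chain -map_comp; congr (_ :: flatten _).
by apply: eq_map => b /=; rewrite belast_tab_pair.
Qed.

Definition key_ge (p q : nat * X) : bool :=
  (q.1 < p.1)%N || ((q.1 == p.1) && (q.2 <= p.2)%O).

Lemma key_ge_total : total key_ge.
Proof.
move=> p q; rewrite /key_ge.
by case: (ltngtP p.1 q.1) => //= _; apply: le_total.
Qed.

Definition tableau_at N r v := is_tableau par v /\ sized N r v.

Lemma spans_sorted_ctab a c K : (2%:R : k) != 0 -> fits c K ->
  sorted >=%O (a :: c) -> uniq (filter par (a :: c)) -> sorted key_ge K ->
  spans (fun v => tableau_at (klen K).+1 (size K) v \/ above K v) (ctab K a c).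
Proof.
move=> two_neq0 fit_c sorted_C uniq_C sorted_K; rewrite /ctab.
have key_bs := bkey_blocks_of fit_c; have chain_bs := chain_blocks_of fit_c.
set bs := blocks_of c K in key_bs chain_bs *.
have [sorted_bs | ] := boolP (sorted (fun b1 b2 => tab_rel par (tab_pair b1) (tab_pair b2)) bs).
  apply: spans_term; left; split.
    exists a, (map tab_pair bs); split; first by rewrite tab_term_pretab.
    by rewrite /tab_cond tab_chain_pretab chain_bs sorted_C uniq_C sorted_map sorted_bs.
  by rewrite /sized tlen_pretab troot_pretab -klen_bkey key_bs size_blocks_of.
move=> /not_sorted_split [bs1 [b1 [b2 [bs2 [def_bs not_rel]]]]].
have : key_ge (bkey b1) (bkey b2).
  by move: sorted_K; rewrite -key_bs def_bs map_cat /= => /cat_sorted2 [_ /andP []].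
move: not_rel; rewrite /tab_rel /key_ge !size_tab_pair !last_tab_pair.
case: b1 b2 def_bs => s l [s' l'] def_bs /=.
case: (ltngtP (size s') (size s)) => //= size_s.
move=> + le_l; rewrite le_l /= negbK => /and3P [odd_l _ /eqP eq_l].
subst l'.
have := spans_twin_odd_blocks a bs1 bs2 two_neq0 (esym size_s) odd_l.
by rewrite -def_bs key_bs; apply: spanned_mono => v; right.
Qed.

Lemma spans_pretab_tableau a bs : (2%:R : k) != 0 ->
  spans (fun v => tableau_at (blen bs).+1 (size bs) v \/ sized (blen bs).+1 (size bs).+1 v)
    (pretab a bs).
Proof.
move=> two_neq0; set bs' := sort [rel b1 b2 | key_ge (bkey b1) (bkey b2)] bs.
have perm_bs : perm_eq bs bs' by rewrite perm_sym perm_sort.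
have [c sort_blocks] := eq_scaled_lprod_perm (Letter a) perm_bs.
apply: equiv_mod_spans (equiv_mod_eq_scaled _ sort_blocks) _.
set K := map bkey bs'.
have sorted_K : sorted key_ge K.
  by rewrite sorted_map; apply: sort_sorted => b1 b2; apply: key_ge_total.
have [blen_K size_K] : klen K = blen bs /\ size K = size bs.
  rewrite klen_bkey size_map (perm_size perm_bs); split => //.
  by rewrite /blen; apply/perm_sumn/perm_map; rewrite perm_sym.
have fit_C : chain_fits K ([::] ++ a :: chain bs') by rewrite /chain_fits /= fits_chain.
set C' := sort >=%O (a :: chain bs').
have perm_C : perm_eq (a :: chain bs') C' by rewrite perm_sym perm_sort.
have [s] := chain_equiv_perm a fit_C perm_C.
rewrite /chain_equiv /chain_tab /ctab /= blocks_of_chain => sort_chain.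
apply: equiv_mod_spans (equiv_mod_mono _ sort_chain) _ => [v|].
  by rewrite /above blen_K size_K; right.
have fit_C' : chain_fits K C' by rewrite /chain_fits -(perm_size perm_C).
have [uniq_C' | /not_uniq_filter_split [q [o [m [r [def_C' odd_o]]]]]] :=
  boolP (uniq (filter par C')); last first.
  rewrite def_C' in fit_C' *; apply: spanned_mono (spans_chain_dup a two_neq0 odd_o fit_C').
  by move=> v; rewrite /above blen_K size_K; right.
have sorted_C' : sorted >=%O C' by apply: (sort_sorted ge_total).
case def_C' : C' fit_C' uniq_C' sorted_C' => [|a' c'] // [fit_c'] uniq_C' sorted_C'.
apply: spanned_mono (spans_sorted_ctab two_neq0 fit_c' sorted_C' uniq_C' sorted_K).
by rewrite /above blen_K size_K.
Qed.

Lemma spans_tableau t : (2%:R : k) != 0 -> spans (tableau_at (tlen t) (troot t)) t.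
Proof.
move=> two_neq0; have [m] := ubnP (tlen t - troot t); elim: m t => // m IH t /ltnSE le_m.
have higher v : tlen v = tlen t -> (troot t < troot v)%N ->
    spans (tableau_at (tlen t) (troot t)) v.
  move=> len_v root_v; have /IH : (tlen v - troot v < m)%N by have := troot_lt_tlen t; lia.
  by apply: spanned_mono => w [tab_w [len_w root_w]]; do 2!split => //; lia.
apply: (spanned_trans (spans_pretab_at t)) => _ [[a [bs ->]] [len_u]].
rewrite troot_pretab leq_eqVlt => /predU1P [eq_root | lt_root]; last first.
  by apply: higher; rewrite ?troot_pretab.
rewrite tlen_pretab in len_u.
apply: (spanned_trans (spans_pretab_tableau a bs two_neq0)) => v.
case=> [[tab_v [len_v root_v]] | [len_v root_v]].
  by apply: spans_term; do 2!split => //; lia.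
by apply: higher; lia.
Qed.

End GDNTableaux.

Theorem lemma2p10 (k : fieldType) (d : Order.disp_t) (X : orderType d)
  (par : X -> bool)
  (wfX : well_founded (fun x y : X => (x < y)%O))
  (char_k : (2%:R : k)%R != 0%R)
  (lam : term X) :
  exists (n : nat) (alpha : 'I_n -> k) (lams : 'I_n -> term X),
    (forall i, [/\ is_tableau par (lams i), tlen (lams i) = tlen lam
                 & (troot lam <= troot (lams i))%N]) /\
    (forall (A : lmodType k) (mul : A -> A -> A) (Apar : bool -> pred A),
       is_GDN_super mul Apar ->
       forall f : X -> A, (forall x, Apar (par x) (f x)) ->
       teval mul f lam = (\sum_(i < n) alpha i *: teval mul f (lams i))%R).
Proof.
have [e tab_e span_e] := spans_tableau par lam char_k.
exists (size e), (fun i => (nth (0, lam) e i).1), (fun i => (nth (0, lam) e i).2).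
split=> [i | A mul Apar gdn f f_par].
  by have [tab_i [len_i root_i]] := all_terms_nth (0, lam) tab_e (ltn_ord i).
have := span_e A mul Apar f (conj gdn f_par).
by rewrite lc_eval1 scale1r => ->; rewrite /lc_eval (big_nth (0, lam)) big_mkord.
Qed.
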